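(* For every $p>0$ and every $\psi\in\mathcal H(V)$, $S_p(\psi)=\psi^{\top}L_p\psi$, where $L_p=D^{-1/2}(D_p-W_p)D^{-1/2}$ is built from $\psi$ as described in the context. In particular $S_2(\psi)=\psi^\top L\psi$ with $L=L_2=D^{-1/2}(D-W)D^{-1/2}$ independent of $\psi$.
   Context: Let $V$ be a finite nonempty set and $E_{un}$ a finite set of subsets of $V$ (hyperedges), each of cardinality at least $2$, with weights $w(e)>0$. Let $E$ be the set of all ordered tuples $e=[v_1,\dots,v_k]$ of distinct vertices whose underlying set belongs to $E_{un}$; write $w(e)$ for the weight of the underlying set, $\delta_e=k$ (also $\delta_e=|e|$ for $e\in E_{un}$), $e_{[1]}=v_1$. Degree $d(v)=\sum_{e\in E_{un}:\,v\in e}w(e)>0$, $D=\mathrm{diag}(d(v))$; $w(u,v)=\sum_{e\in E_{un}:\,u,v\in e}\frac{w(e)}{\delta_e-1}$ for $u\ne v$, $w(v,v)=0$, $W=(w(u,v))$. Gradient: $(\nabla\psi)([v_1,\dots,v_k])=\sqrt{\tfrac{w(e)}{k-1}}\sum_{i=1}^{k}\big(\tfrac{\psi(v_i)}{\sqrt{d(v_i)}}-\tfrac{\psi(v_1)}{\sqrt{d(v_1)}}\big)$. Node gradient norm: $\|\nabla\psi(v)\|=\big(\sum_{e\in E:\,e_{[1]}=v}\frac{(\nabla\psi)(e)^2}{\delta_e!}\big)^{1/2}$. $S_p(\psi)=\sum_{v\in V}\|\nabla\psi(v)\|^p$. Given $\psi$, let $g(v)=\|\nabla\psi(v)\|^{p-2}$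 if $\|\nabla\psi(v)\|>0$ and $g(v)=1$ otherwise; for $e\in E_{un}$, $\bar g_e=\frac1{\delta_e}\sum_{v'\in e}g(v')$; $w_p(u,v)=\sum_{e\in E_{un}:\,u,v\in e}\frac{w(e)}{\delta_e-1}(g(u)+g(v)-\bar g_e)$ for $u\neq v$, $w_p(v,v)=0$; $d_p(v)=d(v)g(v)-\sum_{e\in E_{un}:\,v\in e}\frac{w(e)}{\delta_e-1}(g(v)-\bar g_e)$; $W_p=(w_p(u,v))$, $D_p=\mathrm{diag}(d_p(v))$. *)

From Stdlib Require Import Reals.
From HB Require Import structures.
From mathcomp Require Import all_boot.

Set Implicit Arguments.
Unset Strict Implicit.
Unset Printing Implicit Defensive.

Lemma Rplus_assoc' : associative Rplus.
Proof. by move=> x y z; rewrite Rplus_assoc. Qed.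
Lemma Rplus_0_l' : left_id R0 Rplus.
Proof. exact: Rplus_0_l. Qed.
HB.instance Definition _ := Monoid.isComLaw.Build R R0 Rplus Rplus_assoc' Rplus_comm Rplus_0_l'.

Local Open Scope R_scope.

Section Hypergraph.
Variables (V : finType) (Eun : {set {set V}}) (w : {set V} -> R).

Definition hdeg (v : V) : R := \big[Rplus/R0]_(e in Eun | v \in e) w e.

Definition hW (u v : V) : R :=
  if u == v then 0
  else \big[Rplus/R0]_(e in Eun | (u \in e) && (v \in e)) (w e / (INR #|e| - 1)).

Definition hgrad (psi : V -> R) (we : R) (t : seq V) : R :=
  match t with
  | [::] => 0
  | v1 :: _ => sqrt (we / (INR (size t) - 1)) *
      \big[Rplus/R0]_(x <- t) (psi x / sqrt (hdeg x) - psi v1 / sqrt (hdeg v1))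
  end.

(* ||grad psi (v)||: sum over the ordered tuples e in E (ordered tuples of distinct
   vertices whose underlying set is a hyperedge of E_un) with first entry v.
   An element of E with underlying set e is a #|e|-tuple t with uniq t and [set x in t] = e. *)
Definition node_norm (psi : V -> R) (v : V) : R :=
  sqrt (\big[Rplus/R0]_(e in Eun)
          \big[Rplus/R0]_(t : (#|e|).-tuple V |
                 [&& uniq t, [set x in t] == e & ohead t == Some v])
            ((hgrad psi (w e) t) ^ 2 / INR (factorial #|e|))).

Definition rpow (x p : R) : R := if Rlt_dec 0 x then Rpower x p else 0.

Definition Sp (p : R) (psi : V -> R) : R :=
  \big[Rplus/R0]_(v : V) rpow (node_norm psi v) p.

Definition gp (p : R) (psi : V -> R) (v : V) : R :=
  if Rlt_dec 0 (node_norm psi v) then Rpower (node_norm psi v) (p - 2) else 1.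

Definition gbar (p : R) (psi : V -> R) (e : {set V}) : R :=
  / INR #|e| * \big[Rplus/R0]_(v' in e) gp p psi v'.

Definition hWp (p : R) (psi : V -> R) (u v : V) : R :=
  if u == v then 0
  else \big[Rplus/R0]_(e in Eun | (u \in e) && (v \in e))
         (w e / (INR #|e| - 1) * (gp p psi u + gp p psi v - gbar p psi e)).

Definition hdp (p : R) (psi : V -> R) (v : V) : R :=
  hdeg v * gp p psi v -
  \big[Rplus/R0]_(e in Eun | v \in e) (w e / (INR #|e| - 1) * (gp p psi v - gbar p psi e)).

Definition diagm (f : V -> R) (u v : V) : R := if u == v then f u else 0.

Definition normalized (A B : V -> V -> R) (u v : V) : R :=
  / sqrt (hdeg u) * (A u v - B u v) * / sqrt (hdeg v).

Definition Lp (p : R) (psi : V -> R) : V -> V -> R :=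
  normalized (diagm (hdp p psi)) (hWp p psi).
Definition Lap : V -> V -> R := normalized (diagm hdeg) hW.

Definition quadform (M : V -> V -> R) (psi : V -> R) : R :=
  \big[Rplus/R0]_(u : V) \big[Rplus/R0]_(v : V) (psi u * M u v * psi v).

End Hypergraph.

(** Since [psi x / sqrt (d x)] is the only way [psi] enters, write [f] for it.
  For an ordering of a hyperedge [e] (of size [k]) starting at [v], the
  gradient is [sqrt (w e / (k - 1)) * (S_e f - k f v)], where [S_e f] is the
  sum of [f] over [e]; there are [(k - 1)!] such orderings, so
  [||grad psi (v)||^2 = sum_(e ∋ v) w e / (k (k - 1)) * (S_e f - k f v)^2].
  Then [||grad psi (v)||^p = g v * ||grad psi (v)||^2], and for every weight
  function [g] the sum [sum_v g v * ||grad psi (v)||^2] is, edge by edge, a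
  quadratic form in [f]; collecting its coefficients gives [D_p - W_p].
  For [p = 2] the weights are constantly [1], and [D_p - W_p] becomes [D - W]. *)
From Stdlib Require Import Reals Lra.
From HB Require Import structures.
From mathcomp Require Import all_boot.

Set Implicit Arguments.
Unset Strict Implicit.
Unset Printing Implicit Defensive.

Local Open Scope R_scope.

Notation "\sum_ ( i <- r | P ) F" := (\big[Rplus/R0]_(i <- r | P) F) : R_scope.
Notation "\sum_ ( i : T ) F" := (\big[Rplus/R0]_(i : T) F) : R_scope.
Notation "\sum_ ( i 'in' A ) F" := (\big[Rplus/R0]_(i in A) F) : R_scope.
Notation "\sum_ ( i 'in' A | P ) F" := (\big[Rplus/R0]_(i in A | P) F) : R_scope.

Section RealSums.
Variables (I : Type) (r : seq I) (P : pred I).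
Implicit Types (F G : I -> R) (c : R).

Lemma sumR_mull c F : c * \sum_(i <- r | P i) F i = \sum_(i <- r | P i) (c * F i).
Proof. exact: (big_morph _ (Rmult_plus_distr_l c) (Rmult_0_r c)). Qed.

Lemma sumR_mulr c F : (\sum_(i <- r | P i) F i) * c = \sum_(i <- r | P i) (F i * c).
Proof. by rewrite Rmult_comm sumR_mull; apply: eq_bigr => i _; rewrite Rmult_comm. Qed.

Lemma sumR_opp F : - \sum_(i <- r | P i) F i = \sum_(i <- r | P i) - F i.
Proof. exact: (big_morph _ Ropp_plus_distr Ropp_0). Qed.

Lemma sumR_sub F G :
  \sum_(i <- r | P i) (F i - G i) = \sum_(i <- r | P i) F i - \sum_(i <- r | P i) G i.
Proof. by rewrite /Rminus big_split sumR_opp. Qed.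

Lemma sumR_ge0 F : (forall i, P i -> 0 <= F i) -> 0 <= \sum_(i <- r | P i) F i.
Proof.
by move=> F_ge0; apply: (big_ind (fun x => 0 <= x)) => //; [lra | move=> x y; lra].
Qed.

End RealSums.

Lemma sumR_const (T : finType) (A : {pred T}) c : \sum_(i in A) c = INR #|A| * c.
Proof.
rewrite big_const; elim: #|A| => [|n IHn]; first by rewrite /=; ring.
by rewrite iterS IHn S_INR; ring.
Qed.

Lemma sumR_delta (T : finType) (A : {pred T}) (u : T) (c : R) :
  u \in A -> \sum_(v in A) (if u == v then c else 0) = c.
Proof.
move=> uA; rewrite (bigD1 u) //= eqxx big1 ?Rplus_0_r // => v /andP [_].
by rewrite eq_sym => /negbTE ->.
Qed.

Lemma INR_ge2 (k : nat) : (2 <= k)%N -> 2 <= INR k.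
Proof. by move=> /leP /(le_INR 2); rewrite /=; lra. Qed.

(* At [x = 0] both sides vanish, so the conventions [rpow 0 p = 0] and [g = 1] agree. *)
Lemma rpow_sqr x p : 0 <= x ->
  rpow x p = (if Rlt_dec 0 x then Rpower x (p - 2) else 1) * x ^ 2.
Proof.
rewrite /rpow; case: Rlt_dec => [x_gt0 | x_le0] x_ge0 /=; last first.
  by rewrite (_ : x = 0); [ring | lra].
rewrite -[x * (x * 1)]/(x ^ 2) -(Rpower_pow 2 _ x_gt0) -Rpower_plus.
by congr Rpower; rewrite /=; ring.
Qed.

Section Orderings.
Variables (V : finType) (e : {set V}).

Definition ordering_at (v : V) (t : (#|e|).-tuple V) : bool :=
  [&& uniq t, [set x in t] == e & ohead t == Some v].

Lemma perm_enum_set (s : seq V) : perm_eq s (enum e) = uniq s && ([set x in s] == e).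
Proof.
apply/idP/andP => [s_e | [s_uniq /eqP s_set]].
  split; first by rewrite (perm_uniq s_e) enum_uniq.
  by apply/eqP/setP => x; rewrite inE (perm_mem s_e) mem_enum.
by apply: uniq_perm; rewrite ?enum_uniq // => x; rewrite mem_enum -s_set inE.
Qed.

Lemma ordering_at_head (v : V) (t : (#|e|).-tuple V) : ordering_at v t -> v \in e.
Proof.
rewrite /ordering_at; case: t => [[|x s] sz] //=; first by rewrite andbF.
by case/and3P => _ /eqP <- /eqP [<-]; rewrite inE mem_head.
Qed.

Lemma orderings_atE (v : V) : v \in e ->
  perm_eq (map val (enum (ordering_at v)))
          (map (cons v) (permutations (rem v (enum e)))).
Proof.
move=> ve; have e_v : perm_eq (enum e) (v :: rem v (enum e)).
  by apply: perm_to_rem; rewrite mem_enum.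
apply: uniq_perm.
- by rewrite map_inj_uniq ?enum_uniq //; apply: val_inj.
- by rewrite map_inj_uniq ?permutations_uniq // => a b [].
move=> s; apply/mapP/mapP => [[t] | [s' s'_perm ->]].
  rewrite mem_enum unfold_in /ordering_at; case: t => [[|x s'] sz] /=; first by rewrite andbF.
  case/and3P=> x_uniq x_set /eqP [x_v] ->; subst x; exists s' => //.
  rewrite mem_permutations -(perm_cons v) -(permPr e_v) perm_enum_set.
  by rewrite [uniq _]x_uniq.
have vs'_e : perm_eq (v :: s') (enum e).
  by rewrite (permPr e_v) perm_cons -mem_permutations.
have sz : size (v :: s') == #|e| by rewrite (perm_size vs'_e) -cardE.
exists (Tuple sz) => //; rewrite mem_enum unfold_in /ordering_at /= eqxx andbT.
by move: vs'_e; rewrite perm_enum_set.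
Qed.

Lemma card_ordering_at (v : V) :
  #|ordering_at v| = if v \in e then (#|e|.-1)`! else 0%N.
Proof.
case: ifPn => [ve | vNe]; last first.
  by apply: eq_card0 => t; apply/negP => /ordering_at_head; apply/negP.
rewrite [#|ordering_at v|]cardE -(size_map val) (perm_size (orderings_atE ve)) size_map.
by rewrite size_permutations ?rem_uniq ?enum_uniq // size_rem ?mem_enum // cardE.
Qed.

End Orderings.

Section NodeNorm.
Variables (V : finType) (Eun : {set {set V}}) (w : {set V} -> R).
Hypothesis edge_card_ge2 : forall e, e \in Eun -> (2 <= #|e|)%N.
Hypothesis weight_gt0 : forall e, e \in Eun -> 0 < w e.
Variable psi : V -> R.

Definition scaled (x : V) : R := psi x / sqrt (hdeg Eun w x).

Definition edge_dev (e : {set V}) (v : V) : R := \sum_(x in e) scaled x - INR #|e| * scaled v.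

Definition node_norm2 (v : V) : R :=
  \sum_(e in Eun | v \in e) (w e / (INR #|e| * (INR #|e| - 1)) * edge_dev e v ^ 2).

Lemma hgrad_ordering (e : {set V}) (v : V) (t : seq V) :
  uniq t -> [set x in t] = e -> ohead t = Some v ->
  hgrad Eun w psi (w e) t = sqrt (w e / (INR #|e| - 1)) * edge_dev e v.
Proof.
case: t => [|x s] // t_uniq t_set [x_v]; subst x.
have t_size : size (v :: s) = #|e| by rewrite -t_set cardsE; apply/esym/card_uniqP.
rewrite /hgrad t_size (big_uniq _ t_uniq) sumR_sub sumR_const /edge_dev /scaled.
by rewrite -t_set cardsE; congr (_ * (_ - _)); apply: eq_bigl => y; rewrite inE.
Qed.

Lemma node_norm_sqr (v : V) : node_norm Eun w psi v ^ 2 = node_norm2 v.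
Proof.
rewrite /node_norm pow2_sqrt; last first.
  apply: sumR_ge0 => e _; apply: sumR_ge0 => t _; apply: Rmult_le_pos.
    exact: pow2_ge_0.
  by apply: Rlt_le; apply: Rinv_0_lt_compat; apply: lt_0_INR; apply/ltP; apply: fact_gt0.
rewrite /node_norm2 big_mkcondr; apply: eq_bigr => e eE.
have k2 := edge_card_ge2 eE; have k2R := INR_ge2 k2; have w_gt0 := weight_gt0 eE.
have k_gt0 : (0 < #|e|)%N := ltnW k2.
rewrite (eq_bigr (fun=> w e / (INR #|e| - 1) * edge_dev e v ^ 2 / INR #|e|`!)); last first.
  move=> t /and3P [t_uniq /eqP t_set /eqP t_head].
  rewrite (hgrad_ordering t_uniq t_set t_head) Rpow_mult_distr pow2_sqrt //.
  by apply: Rlt_le; apply: Rdiv_lt_0_compat; lra.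
rewrite sumR_const card_ordering_at; case: ifP => _; last by rewrite /=; ring.
have fact_e : INR #|e|`! = INR #|e| * INR (#|e|.-1)`!.
  by rewrite -mult_INR -{1}(prednK k_gt0) factS prednK.
have : 0 < INR (#|e|.-1)`! by apply: lt_0_INR; apply/ltP; apply: fact_gt0.
by rewrite fact_e => fact_gt0; field; lra.
Qed.

End NodeNorm.

(* For [g := gp p psi], [wdeg] and [wadj] are [hdp p psi] and [hWp p psi] up to conversion. *)
Section WeightedLaplacian.
Variables (V : finType) (Eun : {set {set V}}) (w : {set V} -> R) (g : V -> R).

Definition edge_mean (e : {set V}) : R := / INR #|e| * \sum_(x in e) g x.

Definition wdeg (v : V) : R :=
  hdeg Eun w v * g v - \sum_(e in Eun | v \in e) (w e / (INR #|e| - 1) * (g v - edge_mean e)).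

Definition wadj (u v : V) : R :=
  if u == v then 0
  else \sum_(e in Eun | (u \in e) && (v \in e))
         (w e / (INR #|e| - 1) * (g u + g v - edge_mean e)).

Definition edge_mx (e : {set V}) (u v : V) : R :=
  if (u \in e) && (v \in e) then
    if u == v then w e * g u - w e / (INR #|e| - 1) * (g u - edge_mean e)
    else - (w e / (INR #|e| - 1) * (g u + g v - edge_mean e))
  else 0.

Lemma wlaplacian_edge_sum (u v : V) :
  diagm wdeg u v - wadj u v = \sum_(e in Eun) edge_mx e u v.
Proof.
rewrite /diagm /wadj /edge_mx; case: eqP => [<- | _].
  rewrite Rminus_0_r /wdeg /hdeg sumR_mulr -sumR_sub big_mkcondr.
  by apply: eq_bigr => e _; rewrite andbb.
by rewrite Rminus_0_l sumR_opp big_mkcondr; apply: eq_bigr => e _; case: ifP.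
Qed.

(* Both sides are expanded in the four edge sums [S = sum f], [G = sum g],
   [A = sum g f] and [B = sum g f^2]. *)
Lemma edge_quadratic_form (e : {set V}) (f : V -> R) : (2 <= #|e|)%N ->
  \sum_(v in e) (g v * (w e / (INR #|e| * (INR #|e| - 1)) *
                       (\sum_(x in e) f x - INR #|e| * f v) ^ 2)) =
  \sum_(u in e) \sum_(v in e) (f u * edge_mx e u v * f v).
Proof.
move=> /INR_ge2 k2; set k := INR #|e| in k2 *; set c := w e / (k - 1).
set S := \sum_(x in e) f x; set G := \sum_(x in e) g x.
set A := \sum_(x in e) (g x * f x); set B := \sum_(x in e) (g x * f x ^ 2).
have row_sum u : u \in e -> \sum_(v in e) (f u * edge_mx e u v * f v) =
    (w e + c) * (g u * f u ^ 2) - c * S * (g u * f u) + (c * edge_mean e * S - c * A) * f u.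
  move=> ue; rewrite (eq_bigr (fun v => (if u == v then f u * ((w e + c) * g u) * f u else 0)
      + ((c * edge_mean e * f u - c * g u * f u) * f v - c * f u * (g v * f v)))); last first.
    by move=> v ve; rewrite /edge_mx ue ve /=; case: eqP => [<-|_]; rewrite -/k -/c; ring.
  by rewrite big_split sumR_sub (sumR_delta _ ue) -!sumR_mull -/S -/A /=; ring.
rewrite (eq_bigr _ row_sum); set q := w e / (k * (k - 1)).
rewrite (eq_bigr (fun v => q * S ^ 2 * g v - 2 * k * q * S * (g v * f v)
  + k ^ 2 * q * (g v * f v ^ 2))); last by move=> v _; ring.
rewrite !big_split -!sumR_opp -!sumR_mull -/S -/A -/B -/G /edge_mean -/G -/k /q /c.
have k_neq0 : k <> 0 by lra.
have k1_neq0 : k - 1 <> 0 by lra.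
by rewrite /=; field.
Qed.

Lemma edge_mx_supp (e : {set V}) (f : V -> R) :
  \sum_(u : V) \sum_(v : V) (f u * edge_mx e u v * f v) =
  \sum_(u in e) \sum_(v in e) (f u * edge_mx e u v * f v).
Proof.
rewrite [RHS]big_mkcond; apply: eq_bigr => u _; rewrite /edge_mx.
case: (u \in e) => /=; last by rewrite big1 // => v _; ring.
by rewrite [RHS]big_mkcond; apply: eq_bigr => v _; case: (v \in e) => /=; ring.
Qed.

Lemma weighted_node_norm_sum (psi : V -> R) :
  (forall e, e \in Eun -> (2 <= #|e|)%N) ->
  \sum_(v : V) (g v * node_norm2 Eun w psi v) =
  quadform (normalized Eun w (diagm wdeg) wadj) psi.
Proof.
move=> edge_card_ge2; set f := scaled Eun w psi.
transitivity (\sum_(e in Eun) \sum_(u : V) \sum_(v : V) (f u * edge_mx e u v * f v)).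
  rewrite (eq_bigr (fun v => \sum_(e in Eun) (if v \in e then g v *
      (w e / (INR #|e| * (INR #|e| - 1)) * edge_dev Eun w psi e v ^ 2) else 0))); last first.
    by move=> v _; rewrite /node_norm2 sumR_mull big_mkcondr; apply: eq_bigr => e _; case: ifP.
  rewrite exchange_big; apply: eq_bigr => e eE.
  rewrite -big_mkcond (edge_quadratic_form _ (edge_card_ge2 e eE)).
  by rewrite edge_mx_supp.
rewrite exchange_big; apply: eq_bigr => u _; rewrite exchange_big; apply: eq_bigr => v _.
by rewrite -sumR_mulr -sumR_mull -wlaplacian_edge_sum /normalized /f /scaled /Rdiv; ring.
Qed.

End WeightedLaplacian.

Lemma quadform_ext (V : finType) (M N : V -> V -> R) (psi : V -> R) :
  (forall u v, M u v = N u v) -> quadform M psi = quadform N psi.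
Proof. by move=> MN; apply: eq_bigr => u _; apply: eq_bigr => v _; rewrite MN. Qed.

Lemma Lp2_Lap (V : finType) (Eun : {set {set V}}) (w : {set V} -> R) (psi : V -> R) :
  (forall e, e \in Eun -> (2 <= #|e|)%N) ->
  forall u v, Lp Eun w 2 psi u v = Lap Eun w u v.
Proof.
move=> edge_card_ge2; have gp2 x : gp Eun w 2 psi x = 1.
  by rewrite /gp; case: Rlt_dec => //= x_gt0; rewrite Rminus_diag Rpower_O.
have mean1 e : e \in Eun -> gbar Eun w 2 psi e = 1.
  move=> /edge_card_ge2 /INR_ge2 k2; rewrite /gbar (eq_bigr (fun=> 1)) // sumR_const.
  by field; lra.
move=> u v; rewrite /Lp /Lap /normalized /diagm /hdp /hWp /hW gp2.
congr (_ * (_ - _) * _); case: eqP => // _.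
  by rewrite big1 => [|e /andP [/mean1 -> _]]; ring.
by apply: eq_bigr => e /andP [/mean1 -> _]; rewrite gp2; ring.
Qed.

Theorem proposition3 (V : finType) (Eun : {set {set V}}) (w : {set V} -> R)
  (HV : (0 < #|V|)%N)
  (Hcard : forall e, e \in Eun -> (2 <= #|e|)%N)
  (Hw : forall e, e \in Eun -> 0 < w e)
  (Hdeg : forall v, 0 < hdeg Eun w v)
  (p : R) (Hp : 0 < p) (psi : V -> R) :
  Sp Eun w p psi = quadform (Lp Eun w p psi) psi /\
  Sp Eun w 2 psi = quadform (Lap Eun w) psi.
Proof.
have Sp_quadform q : Sp Eun w q psi = quadform (Lp Eun w q psi) psi.
  rewrite /Sp (eq_bigr (fun v => gp Eun w q psi v * node_norm2 Eun w psi v)).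
    exact: weighted_node_norm_sum.
  move=> v _; rewrite rpow_sqr ?node_norm_sqr //; exact: sqrt_pos.
split; first exact: Sp_quadform.
by rewrite Sp_quadform; apply: quadform_ext; apply: Lp2_Lap.
Qed.
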